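(* Let $\mathcal{M}_{EL}=(W,(R_i)_{i\in\mathbf{A}},V)$ be an EL model and let $\mathcal{M}^\alpha_{AK}$ be its induced AK model. Then for every world $w\in W$, every EL formula $\varphi$ and every $i\in\mathbf{A}$: $\mathcal{M}_{EL},w\models\varphi$ if and only if $\mathcal{M}^\alpha_{AK},(i,w)\models T(\varphi)$.
   Context: Epistemic logic: disjoint sets $\mathbf{Prop}$, $\mathbf{A}$; formulas $\varphi ::= p \mid \neg\varphi \mid \varphi\land\varphi \mid K_i\varphi$; EL models $(W,(R_i)_{i\in\mathbf{A}},V)$ with $W\neq\emptyset$, $R_i\subseteq W\times W$, $V:\mathbf{Prop}\to\mathcal{P}(W)$; $w\models p$ iff $w\in V(p)$, Booleans as usual, $w\models K_i\varphi$ iff $v\models\varphi$ for all $v$ with $wR_iv$. Agent-knowledge logic: pairwise disjoint sets $\mathbf{Prop}_A,\mathbf{Prop}_K,\mathbf{Nom}_A,\mathbf{Nom}_K$; formulas $\varphi ::= p_A \mid p_K \mid a \mid k \mid \neg\varphi \mid \varphi\land\varphi \mid \Box_A\varphi \mid \Box_K\varphi \mid @_a\varphi \mid @_k\varphi$. AK models $(W_A, W_K, (R_y)_{y \in W_K}, (S_x)_{x \in W_A}, V)$: $W_A,W_K$ non-empty, $R_y\subseteq W_A\times W_A$, $S_x\subseteq W_K\times W_K$, $V$ sends $\mathbf{Prop}_A\cup\mathbf{Nom}_A$ to subsets of $W_A$ and $\mathbf{Prop}_K\cup\mathbf{Nom}_K$ to subsets of $W_K$, with $V(a)=\{a^V\}$,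 $V(k)=\{k^V\}$ singletons for nominals. Satisfaction at $(x,y)$: $p_A$ iff $x\in V(p_A)$; $p_K$ iff $y\in V(p_K)$; $a$ iff $x=a^V$; $k$ iff $y=k^V$; Booleans as usual; $\Box_A\varphi$ iff $(x',y)\models\varphi$ for all $x'$ with $xR_yx'$; $\Box_K\varphi$ iff $(x,y')\models\varphi$ for all $y'$ with $yS_xy'$; $@_a\varphi$ iff $(a^V,y)\models\varphi$; $@_k\varphi$ iff $(x,k^V)\models\varphi$. Translation $T$: bijections $\mathbf{Prop}\to\mathbf{Prop}_K$ and $\mathbf{A}\to\mathbf{Nom}_A$, $T(\neg\varphi)=\neg T(\varphi)$, $T(\varphi\land\psi)=T(\varphi)\land T(\psi)$, $T(K_i\varphi)=@_{T(i)}\Box_KT(\varphi)$. Induced AK model: given the EL model, fix some $y_0\in W$; $\mathcal{M}^\alpha_{AK}=(W_A,W_K,(R'_y)_{y\in W_K},(S_x)_{x\in W_A},V^\alpha)$ with $W_A=\mathbf{A}$, $W_K=W$, $R'_y=\emptyset$ for all $y$, $S_i=R_i$ for each $i\in\mathbf{A}$, $V^\alpha(p_A)=\emptyset$ for $p_A\in\mathbf{Prop}_A$, $V^\alpha(p_K)=V(T^{-1}(p_K))$ for $p_K\in\mathbf{Prop}_K$, $V^\alpha(a)=\{T^{-1}(a)\}$ for $a\in\mathbf{Nom}_A$, and $V^\alpha(k)=\{y_0\}$ for $k\in\mathbf{Nom}_K$. *)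

Set Implicit Arguments.

Section EL.
Variables (Prp Ag : Type).

Inductive ELform : Type :=
| ELvar : Prp -> ELform
| ELneg : ELform -> ELform
| ELand : ELform -> ELform -> ELform
| ELK   : Ag -> ELform -> ELform.

Record ELmodel := {
  el_W : Type;
  el_W_ne : inhabited el_W;
  el_R : Ag -> el_W -> el_W -> Prop;
  el_V : Prp -> el_W -> Prop
}.

Fixpoint el_sat (M : ELmodel) (w : el_W M) (phi : ELform) : Prop :=
  match phi with
  | ELvar p => el_V M p w
  | ELneg f => ~ el_sat M w f
  | ELand f g => el_sat M w f /\ el_sat M w g
  | ELK i f => forall v, el_R M i w v -> el_sat M v f
  end.
End EL.
Arguments ELvar {Prp Ag} _.
Arguments ELneg {Prp Ag} _.
Arguments ELand {Prp Ag} _ _.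
Arguments ELK {Prp Ag} _ _.


(** * Agent-knowledge logic (AK).  The four pairwise disjoint symbol sets
    Prop_A, Prop_K, Nom_A, Nom_K are modelled as four separate types. *)
Section AK.
Variables (PropA PropK NomA NomK : Type).

Inductive AKform : Type :=
| AKpA  : PropA -> AKform
| AKpK  : PropK -> AKform
| AKnA  : NomA -> AKform
| AKnK  : NomK -> AKform
| AKneg : AKform -> AKform
| AKand : AKform -> AKform -> AKform
| AKboxA : AKform -> AKform
| AKboxK : AKform -> AKform
| AKatA : NomA -> AKform -> AKform
| AKatK : NomK -> AKform -> AKform.

(* Nominal valuations V(a) = {a^V} are singletons; we represent them by
   the denoted point a^V. *)
Record AKmodel := {
  ak_WA : Type;
  ak_WK : Type;
  ak_WA_ne : inhabited ak_WA;
  ak_WK_ne : inhabited ak_WK;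
  ak_R : ak_WK -> ak_WA -> ak_WA -> Prop;
  ak_S : ak_WA -> ak_WK -> ak_WK -> Prop;
  ak_VpA : PropA -> ak_WA -> Prop;
  ak_VpK : PropK -> ak_WK -> Prop;
  ak_nomA : NomA -> ak_WA;
  ak_nomK : NomK -> ak_WK
}.

Fixpoint ak_sat (M : AKmodel) (x : ak_WA M) (y : ak_WK M) (phi : AKform)
  : Prop :=
  match phi with
  | AKpA p => ak_VpA M p x
  | AKpK p => ak_VpK M p y
  | AKnA a => x = ak_nomA M a
  | AKnK k => y = ak_nomK M k
  | AKneg f => ~ ak_sat M x y f
  | AKand f g => ak_sat M x y f /\ ak_sat M x y g
  | AKboxA f => forall x', ak_R M y x x' -> ak_sat M x' y f
  | AKboxK f => forall y', ak_S M x y y' -> ak_sat M x y' f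
  | AKatA a f => ak_sat M (ak_nomA M a) y f
  | AKatK k f => ak_sat M x (ak_nomK M k) f
  end.
End AK.
Arguments AKpA {PropA PropK NomA NomK} _.
Arguments AKpK {PropA PropK NomA NomK} _.
Arguments AKnA {PropA PropK NomA NomK} _.
Arguments AKnK {PropA PropK NomA NomK} _.
Arguments AKneg {PropA PropK NomA NomK} _.
Arguments AKand {PropA PropK NomA NomK} _ _.
Arguments AKboxA {PropA PropK NomA NomK} _.
Arguments AKboxK {PropA PropK NomA NomK} _.
Arguments AKatA {PropA PropK NomA NomK} _ _.
Arguments AKatK {PropA PropK NomA NomK} _ _.


Fixpoint transl {Prp Ag PropA PropK NomA NomK : Type}
  (tP : Prp -> PropK) (tA : Ag -> NomA) (phi : ELform Prp Ag)
  : AKform PropA PropK NomA NomK :=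
  match phi with
  | ELvar p => AKpK (tP p)
  | ELneg f => AKneg (transl tP tA f)
  | ELand f g => AKand (transl tP tA f) (transl tP tA g)
  | ELK i f => AKatA (tA i) (AKboxK (transl tP tA f))
  end.

(** * The induced AK model M^alpha_AK.  [tPinv], [tAinv] are the inverses
    T^{-1} of the bijections; [y0] is the fixed world of W. *)
Definition induced_AK {Prp Ag PropA PropK NomA NomK : Type}
  (M : ELmodel Prp Ag) (agent0 : Ag)
  (tPinv : PropK -> Prp) (tAinv : NomA -> Ag) (y0 : el_W M)
  : AKmodel PropA PropK NomA NomK :=
  {| ak_WA := Ag;
     ak_WK := el_W M;
     ak_WA_ne := inhabits agent0;
     ak_WK_ne := el_W_ne M;
     ak_R := fun _ _ _ => False;
     ak_S := fun i => el_R M i;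
     ak_VpA := fun _ _ => False;
     ak_VpK := fun pK w => el_V M (tPinv pK) w;
     ak_nomA := fun a => tAinv a;
     ak_nomK := fun _ => y0 |}.


(* The agent coordinate of an evaluation point never matters for a translated
   formula: [T (K_i phi)] jumps to the nominal of [i] before moving, and the
   knowledge relation [S_i] of the induced model is [R_i] itself. *)

Section InducedModel.

Variables (Prp Ag PropA PropK NomA NomK : Type).
Variables (tP : Prp -> PropK) (tPinv : PropK -> Prp).
Variables (tA : Ag -> NomA) (tAinv : NomA -> Ag).
Hypothesis tP_K : forall p, tPinv (tP p) = p.
Hypothesis tA_K : forall i, tAinv (tA i) = i.
Variables (M : ELmodel Prp Ag) (agent0 : Ag) (y0 : el_W M).

Let N : AKmodel PropA PropK NomA NomK := induced_AK M agent0 tPinv tAinv y0.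

Lemma el_sat_transl_induced (phi : ELform Prp Ag) :
  forall (x : Ag) (w : el_W M),
    el_sat M w phi <-> ak_sat N x w (transl tP tA phi).
Proof.
  induction phi as [p | f IH | f IHf g IHg | j f IH]; intros x w; simpl.
  - rewrite tP_K. tauto.
  - specialize (IH x w). tauto.
  - specialize (IHf x w). specialize (IHg x w). tauto.
  - rewrite tA_K. split; intros Hsat v Hjwv.
    + apply (IH j v), Hsat, Hjwv.
    + apply (IH j v), Hsat, Hjwv.
Qed.

End InducedModel.

Theorem mainTheorem3
  (Prp Ag PropA PropK NomA NomK : Type)
  (tP : Prp -> PropK) (tPinv : PropK -> Prp)
  (tP_K : forall p, tPinv (tP p) = p) (tP_K' : forall q, tP (tPinv q) = q)
  (tA : Ag -> NomA) (tAinv : NomA -> Ag)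
  (tA_K : forall i, tAinv (tA i) = i) (tA_K' : forall a, tA (tAinv a) = a)
  (M : ELmodel Prp Ag) (y0 : el_W M) :
  forall (w : el_W M) (phi : ELform Prp Ag) (i : Ag),
    el_sat M w phi <->
    ak_sat (induced_AK (PropA := PropA) (NomK := NomK) M i tPinv tAinv y0)
           i w (transl tP tA phi).
Proof.
  intros w phi i.
  apply el_sat_transl_induced; assumption.
Qed.
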